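(* Let $G$ be a finite group acting on a set $S$ via $\bullet: G\times S\to S$ (so $(gh)\bullet x=g\bullet(h\bullet x)$), and let $F\le H\trianglelefteq G$. Let $A$ be a randomized algorithm which takes a list of elements of $G$ and outputs an element of $S$. Define the randomized algorithm $B$ on input $g_1,\dots,g_n\in G$ ($n\ge 2$): sample $f$ uniformly from $F$, compute $(g_1',\dots,g_n')\gets\textsc{Kilian}_H(fg_1,g_2,\dots,g_n)$, and return $f^{-1}\bullet A(g_1',\dots,g_n')$. Then the output distribution of $B(g_1,\dots,g_n)$ is $(g_1\cdots g_n)\bullet\mathcal D$, where $\mathcal D=\mathcal D(Fg_1\cdots g_n,g_1H,\dots,g_nH)$ is the uniform average, over all tuples $(g_1',\dots,g_n')\in G^n$ with $g_1'\cdots g_n'\in Fg_1\cdots g_n$ and $g_i'H=g_iH$ for all $i$, of the distribution of $(g_1'\cdots g_n')^{-1}\bullet A(g_1',\dots,g_n')$.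
   Context: $\textsc{Kilian}_H(g_1,\dots,g_n)$ (for $H\trianglelefteq G$, $n\ge 2$): sample $h_1,\dots,h_{n-1}$ independently and uniformly from $H$; set $g_1'=g_1h_1$, $g_i'=h_{i-1}^{-1}g_ih_i$ for $i=2,\dots,n-1$, and $g_n'=h_{n-1}^{-1}g_n$; return $(g_1',\dots,g_n')$. For a distribution $\mathcal D$ on $S$ and $g\in G$, $g\bullet\mathcal D$ denotes the distribution of $g\bullet x$ for $x\sim\mathcal D$. *)

From HB Require Import structures.
From mathcomp Require Import all_boot all_order all_fingroup all_algebra.
From mathcomp Require Import reals.
Set Implicit Arguments. Unset Strict Implicit. Unset Printing Implicit Defensive.
Import GRing.Theory Num.Theory.

(* Distributions on a type S are represented by probability mass functions
   S -> R.  A randomized algorithm taking a list of group elements and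
   outputting an element of S is a map  seq gT -> (S -> R). *)

Section Defs.
Variables (gT : finGroupType) (S : Type) (R : realType).

(* g \bullet D : pushforward of D along the bijection x |-> act g x;
   its mass at y is D(g^-1 \bullet y). *)
Definition dact (act : gT -> S -> S) (g : gT) (D : S -> R) : S -> R :=
  fun y => D (act (g^-1)%g y).

Definition unif_mix (T : finType) (P : {pred T}) (K : T -> S -> R) : S -> R :=
  fun y => ((#|P|%:R)^-1 * \sum_(t in P) K t y)%R.

(* Kilian_H applied to the list g with randomness h = (h_1,...,h_{n-1}):
   g'_1 = g_1 h_1, g'_i = h_{i-1}^-1 g_i h_i, g'_n = h_{n-1}^-1 g_n
   (indices shifted to start at 0). *)
Definition kilian_det (g h : seq gT) : seq gT :=
  mkseq (fun i => ((if i == 0 then 1 else nth 1 h i.-1)^-1 * nth 1 g i *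
                   (if i.+1 < size g then nth 1 h i else 1))%g) (size g).

Definition kilian_rand (n : nat) (H : {set gT}) : {pred (n.-1).-tuple gT} :=
  [pred h : (n.-1).-tuple gT | all (fun x => x \in H) h].

Definition kilian_then (n : nat) (H : {set gT}) (g : n.-tuple gT)
  (K : seq gT -> S -> R) : S -> R :=
  unif_mix (@kilian_rand n H) (fun h => K (kilian_det g h)).

Definition gprod (g : seq gT) : gT := (\prod_(x <- g) x)%g.

Definition lmul_first (f : gT) (n : nat) (g : n.-tuple gT) : n.-tuple gT :=
  [tuple (if val i == 0%N then f * tnth g i else tnth g i)%g | i < n].

Definition algB (act : gT -> S -> S) (F H : {set gT}) (A : seq gT -> S -> R)
  (n : nat) (g : n.-tuple gT) : S -> R :=
  unif_mix (mem F) (fun f => dact act (f^-1)%g (@kilian_then n H (lmul_first f g) A)).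

Definition Dcal (act : gT -> S -> S) (F H : {set gT}) (A : seq gT -> S -> R)
  (n : nat) (g : n.-tuple gT) : S -> R :=
  unif_mix [pred g' : n.-tuple gT | ((gprod g' \in F :* gprod g)%g) &&
                                     [forall i : 'I_n, ((tnth g' i *: H)%g == (tnth g i *: H)%g)]]
           (fun g' => dact act ((gprod g')^-1)%g (A g')).

End Defs.

From HB Require Import structures.
From mathcomp Require Import all_boot all_order all_fingroup all_algebra.
From mathcomp Require Import reals.
Set Implicit Arguments. Unset Strict Implicit. Unset Printing Implicit Defensive.
Import GRing.Theory Num.Theory.

(* For f in F and h in H^(n-1), the output g' of Kilian_H(f g_1, g_2, ..., g_n)
   has product f g_1...g_n, which recovers f, and prefix products
   g'_1...g'_k = f g_1...g_k h_k, which recover h.  Conversely, as H is normal,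
   a tuple g' with g'_i H = g_i H and g'_1...g'_n in F g_1...g_n is reached by
   f := (g'_1...g'_n)(g_1...g_n)^-1 and h_k := (f g_1...g_k)^-1 g'_1...g'_k.
   So (f, h) |-> g' is a bijection from F x H^(n-1) onto the tuples averaged
   in D, and reindexing B's average along it turns f^-1 into
   (g_1...g_n)(g'_1...g'_n)^-1. *)

Section UniformMixtures.
Variables (S : Type) (R : realType).

Lemma eq_unif_mix (T : finType) (P Q : {pred T}) (K : T -> S -> R) :
  P =i Q -> unif_mix P K = unif_mix Q K.
Proof.
move=> PQ; apply: boolp.funext => y.
by rewrite /unif_mix (eq_card PQ) (eq_bigl _ _ PQ).
Qed.

Lemma unif_mix_imset (T T' : finType) (D : {pred T}) (phi : T -> T')
    (K : T' -> S -> R) :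
  {in D &, injective phi} ->
  unif_mix (mem [set phi t | t in D]) K = unif_mix D (fun t => K (phi t)).
Proof.
move=> phi_inj; apply: boolp.funext => y.
by rewrite /unif_mix card_in_imset // big_imset.
Qed.

Lemma unif_mix_pair (T1 T2 : finType) (P1 : {pred T1}) (P2 : {pred T2})
    (K : T1 -> T2 -> S -> R) :
  unif_mix P1 (fun t1 => unif_mix P2 (K t1)) =
  unif_mix [predX P1 & P2] (fun t => K t.1 t.2).
Proof.
apply: boolp.funext => y; rewrite /unif_mix cardX natrM invfM -mulrA.
by congr (_ * _)%R; rewrite -mulr_sumr pair_big.
Qed.

End UniformMixtures.

Section ActionOnDistributions.
Variables (gT : finGroupType) (S : Type) (R : realType) (act : gT -> S -> S).

Lemma dact_unif_mix (T : finType) (P : {pred T}) (K : T -> S -> R) (x : gT) :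
  dact act x (unif_mix P K) = unif_mix P (fun t => dact act x (K t)).
Proof. by []. Qed.

Hypothesis actM : forall (x y : gT) s, act (x * y)%g s = act x (act y s).

Lemma dactM (x y : gT) (D : S -> R) :
  dact act x (dact act y D) = dact act (x * y)%g D.
Proof. by apply: boolp.funext => s; rewrite /dact invMg actM. Qed.

End ActionOnDistributions.

Section KilianAlgebra.
Variable gT : finGroupType.
Local Open Scope group_scope.
Implicit Types (s h : seq gT) (f : gT).

Definition prefix_prod s k : gT := \prod_(0 <= j < k) nth 1 s j.

(* The paper's h_k (h_1, ..., h_(n-1) stored 0-based in h), padded with
   h_0 = h_n = 1, so that g'_k = h_(k-1)^-1 g_k h_k. *)
Definition kilian_mask s h k : gT :=
  if (0 < k < size s)%N then nth 1 h k.-1 else 1.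

Lemma prefix_prod0 s : prefix_prod s 0 = 1.
Proof. by rewrite /prefix_prod big_geq. Qed.

Lemma prefix_prodS s k : prefix_prod s k.+1 = prefix_prod s k * nth 1 s k.
Proof. by rewrite /prefix_prod big_nat_recr. Qed.

Lemma gprod_prefix_prod s : gprod s = prefix_prod s (size s).
Proof. by rewrite /gprod (big_nth 1). Qed.

Lemma size_kilian_det s h : size (kilian_det s h) = size s.
Proof. by rewrite size_mkseq. Qed.

Lemma nth_kilian_det s h i : (i < size s)%N ->
  nth 1 (kilian_det s h) i = (kilian_mask s h i)^-1 * nth 1 s i * kilian_mask s h i.+1.
Proof.
move=> lt_i; rewrite nth_mkseq // /kilian_mask.
by case: i lt_i => [|i] lt_i /=; rewrite ?lt_i.
Qed.

Lemma prefix_prod_kilian_det s h k : (k <= size s)%N ->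
  prefix_prod (kilian_det s h) k = prefix_prod s k * kilian_mask s h k.
Proof.
elim: k => [|k IHk] lt_k; first by rewrite !prefix_prod0 /kilian_mask mulg1.
by rewrite !prefix_prodS IHk ?(ltnW lt_k) // nth_kilian_det // !mulgA mulgK.
Qed.

Lemma gprod_kilian_det s h : gprod (kilian_det s h) = gprod s.
Proof.
rewrite !gprod_prefix_prod size_kilian_det prefix_prod_kilian_det //.
by rewrite /kilian_mask ltnn andbF mulg1.
Qed.

Lemma nth_lmul_first f n (g : n.-tuple gT) i : (i < n)%N ->
  nth 1 (lmul_first f g) i = (if i == 0%N then f else 1) * nth 1 g i.
Proof.
move=> lt_i; rewrite -[i]/(nat_of_ord (Ordinal lt_i)) -!tnth_nth tnth_mktuple /=.
by case: ifP; rewrite ?mul1g.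
Qed.

Lemma prefix_prod_lmul_first f n (g : n.-tuple gT) k : (0 < k <= n)%N ->
  prefix_prod (lmul_first f g) k = f * prefix_prod g k.
Proof.
elim: k => [//|k IHk] /andP[_ lt_k].
rewrite !prefix_prodS nth_lmul_first //; case: k IHk lt_k => [|k] IHk lt_k /=.
  by rewrite !prefix_prod0 !mul1g.
by rewrite IHk ?(ltnW lt_k) // mul1g mulgA.
Qed.

Lemma gprod_lmul_first f n (g : n.-tuple gT) : (0 < n)%N ->
  gprod (lmul_first f g) = f * gprod g.
Proof.
move=> n_gt0; rewrite !gprod_prefix_prod !size_tuple.
by rewrite prefix_prod_lmul_first // n_gt0 /=.
Qed.

Lemma size_kilian_det_tuple n (s : n.-tuple gT) h : size (kilian_det s h) == n.
Proof. by rewrite size_kilian_det size_tuple. Qed.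

Definition kilian_lmul n (g : n.-tuple gT) (p : gT * (n.-1).-tuple gT) : n.-tuple gT :=
  Tuple (size_kilian_det_tuple (lmul_first p.1 g) p.2).

Lemma gprod_kilian_lmul n (g : n.-tuple gT) p : (0 < n)%N ->
  gprod (kilian_lmul g p) = p.1 * gprod g.
Proof. by move=> n_gt0; rewrite gprod_kilian_det gprod_lmul_first. Qed.

Lemma kilian_det_inj n (s : n.-tuple gT) :
  injective (fun h : (n.-1).-tuple gT => kilian_det s h).
Proof.
move=> h1 h2 eq_h; apply: eq_from_tnth => i.
have lt_i : (i.+1 < n)%N by rewrite -ltn_predRL.
have := congr1 (prefix_prod^~ i.+1) eq_h.
rewrite !prefix_prod_kilian_det ?size_tuple ?(ltnW lt_i) //.
by rewrite /kilian_mask size_tuple lt_i /= => /mulgI; rewrite !(tnth_nth 1).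
Qed.

Lemma kilian_lmul_inj n (g : n.-tuple gT) : (0 < n)%N -> injective (kilian_lmul g).
Proof.
move=> n_gt0 [f1 h1] [f2 h2] eq_t.
have eq_f : f1 = f2.
  have := congr1 (fun t : n.-tuple gT => gprod t) eq_t.
  by rewrite !gprod_kilian_lmul // => /mulIg.
rewrite -eq_f in eq_t *; congr pair.
exact: (@kilian_det_inj _ (lmul_first f1 g)) (congr1 val eq_t).
Qed.

Definition prefix_quotients n (s t : n.-tuple gT) : (n.-1).-tuple gT :=
  [tuple (prefix_prod s i.+1)^-1 * prefix_prod t i.+1 | i < n.-1].

Lemma kilian_mask_prefix_quotients n (s t : n.-tuple gT) k :
  gprod s = gprod t -> (k <= n)%N ->
  kilian_mask s (prefix_quotients s t) k = (prefix_prod s k)^-1 * prefix_prod t k.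
Proof.
move=> eq_prod; rewrite /kilian_mask size_tuple; case: k => [|k] le_k /=.
  by rewrite !prefix_prod0 invg1 mulg1.
case: ltnP => [lt_k | ge_k].
  have lt_k' : (k < n.-1)%N by rewrite ltn_predRL.
  by rewrite -[k]/(nat_of_ord (Ordinal lt_k')) nth_mktuple.
have {le_k ge_k} -> : k.+1 = size s by apply/eqP; rewrite size_tuple eqn_leq le_k.
by rewrite -gprod_prefix_prod eq_prod gprod_prefix_prod !size_tuple mulVg.
Qed.

Lemma kilian_det_prefix_quotients n (s t : n.-tuple gT) :
  gprod s = gprod t -> kilian_det s (prefix_quotients s t) = t.
Proof.
move=> eq_prod; apply: (@eq_from_nth _ 1); rewrite size_kilian_det ?size_tuple // => i lt_i.
rewrite nth_kilian_det ?size_tuple // !kilian_mask_prefix_quotients ?(ltnW lt_i) //.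
by rewrite !prefix_prodS !invMg invgK !mulgA mulgK mulgK mulVg mul1g.
Qed.

End KilianAlgebra.

Section NormalCosets.
Variables (gT : finGroupType) (H : {group gT}).
Local Open Scope group_scope.
Implicit Types (s t u h : seq gT) (f : gT).

Definition same_lcosets s t := forall i, (nth 1 s i)^-1 * nth 1 t i \in H.

Lemma same_lcosets_sym s t : same_lcosets s t -> same_lcosets t s.
Proof. by move=> st i; rewrite -groupV invMg invgK. Qed.

Lemma same_lcosets_trans s t u :
  same_lcosets s t -> same_lcosets t u -> same_lcosets s u.
Proof. by move=> st tu i; have := groupM (st i) (tu i); rewrite !mulgA mulgK. Qed.

Lemma same_lcosetsP n (s t : n.-tuple gT) :
  reflect (same_lcosets s t) [forall i : 'I_n, tnth t i *: H == tnth s i *: H].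
Proof.
apply: (iffP forallP) => [eq_cosets i | st i].
  case: (ltnP i n) => [lt_i | ge_i].
    by have /eqP/lcoset_eqP := eq_cosets (Ordinal lt_i); rewrite mem_lcoset !(tnth_nth 1).
  by rewrite !nth_default ?size_tuple // invg1 mul1g group1.
by apply/eqP/lcoset_eqP; rewrite mem_lcoset !(tnth_nth 1).
Qed.

Hypothesis normalH : H <| [set: gT].

Lemma memJ_normal x y : (x ^ y \in H) = (x \in H).
Proof. by rewrite memJ_norm // (subsetP (normal_norm normalH)) ?inE. Qed.

Lemma same_lcosets_lmul_first f n (g : n.-tuple gT) :
  f \in H -> same_lcosets g (lmul_first f g).
Proof.
move=> Hf i; case: (ltnP i n) => [lt_i | ge_i].
  by rewrite nth_lmul_first // -conjgE memJ_normal; case: eqP.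
by rewrite !nth_default ?size_tuple // invg1 mul1g group1.
Qed.

Lemma same_lcosets_kilian_det s h :
  {subset h <= H} -> same_lcosets s (kilian_det s h).
Proof.
move=> Hh i; have Hmask k : kilian_mask s h k \in H.
  rewrite /kilian_mask; case: ifP => _; last exact: group1.
  case: (ltnP k.-1 (size h)) => [lt_k | ge_k]; last by rewrite nth_default.
  by apply: Hh; rewrite mem_nth.
case: (ltnP i (size s)) => [lt_i | ge_i].
  by rewrite nth_kilian_det // mulgA -conjgE groupM ?memJ_normal ?groupV.
by rewrite !nth_default ?size_kilian_det // invg1 mul1g group1.
Qed.

Lemma prefix_prod_same_lcosets s t k :
  same_lcosets s t -> (prefix_prod s k)^-1 * prefix_prod t k \in H.
Proof.
move=> st; elim: k => [|k IHk]; first by rewrite !prefix_prod0 invg1 mul1g group1.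
have := groupM (etrans (memJ_normal _ (nth 1 s k)) IHk) (st k).
by rewrite !prefix_prodS invMg conjgE !mulgA mulgK.
Qed.

End NormalCosets.

Section KilianImage.
Variables (gT : finGroupType) (F H : {group gT}).
Local Open Scope group_scope.
Hypotheses (sFH : F \subset H) (normalH : H <| [set: gT]).

Lemma kilian_lmul_image n (g : n.-tuple gT) : (0 < n)%N ->
  [pred t : n.-tuple gT | (gprod t \in F :* gprod g) &&
                          [forall i : 'I_n, tnth t i *: H == tnth g i *: H]]
  =i [set kilian_lmul g p | p in [predX (mem F) & @kilian_rand _ n H]].
Proof.
move=> n_gt0 t; rewrite inE; apply/andP/imsetP.
  case=> t_coset /same_lcosetsP g_t.
  pose f := gprod t * (gprod g)^-1; pose s := lmul_first f g.
  have Ff : f \in F by rewrite -mem_rcoset.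
  have s_t : same_lcosets H s t.
    apply: same_lcosets_trans g_t; apply: same_lcosets_sym.
    by apply: same_lcosets_lmul_first => //; apply: (subsetP sFH).
  exists (f, prefix_quotients s t).
    rewrite !inE Ff /=; apply/allP => _ /mapP[i _ ->].
    exact: prefix_prod_same_lcosets.
  apply: val_inj; apply: esym; apply: kilian_det_prefix_quotients.
  by rewrite gprod_lmul_first // mulgKV.
case=> -[f h] /andP[/= Ff Hh] ->; split.
  by rewrite gprod_kilian_lmul // mem_rcoset mulgK.
apply/same_lcosetsP.
apply: same_lcosets_trans (same_lcosets_kilian_det normalH _ (allP Hh)).
by apply: same_lcosets_lmul_first => //; apply: (subsetP sFH).
Qed.

End KilianImage.

Lemma algB_kilian_lmul (gT : finGroupType) (S : Type) (R : realType)
    (act : gT -> S -> S) (F H : {group gT}) (A : seq gT -> S -> R)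
    n (g : n.-tuple gT) :
  algB act F H A g =
  unif_mix [predX (mem F) & @kilian_rand _ n H]
    (fun p => dact act (p.1^-1)%g (A (kilian_lmul g p))).
Proof.
transitivity (unif_mix (mem F) (fun f => unif_mix (kilian_rand H)
                 (fun h => dact act f^-1 (A (kilian_lmul g (f, h))))))%g; first by [].
by rewrite unif_mix_pair; congr unif_mix; apply: boolp.funext => -[f h].
Qed.

Theorem mainTheorem7 (gT : finGroupType) (S : Type) (R : realType)
  (act : gT -> S -> S)
  (act1 : forall x, act 1%g x = x)
  (actM : forall (g h : gT) x, act (g * h)%g x = act g (act h x))
  (F H : {group gT}) (FsubH : F \subset H) (Hnormal : (H <| [set: gT])%g)
  (A : seq gT -> S -> R)
  (n : nat) (n_ge2 : (2 <= n)%N) (g : n.-tuple gT) :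
  algB act F H A g = dact act (gprod g) (Dcal act F H A g).
Proof.
have n_gt0 : (0 < n)%N := ltnW n_ge2.
rewrite /Dcal (eq_unif_mix _ (kilian_lmul_image FsubH Hnormal g n_gt0)).
rewrite unif_mix_imset; last by move=> p q _ _; apply: kilian_lmul_inj.
rewrite dact_unif_mix algB_kilian_lmul; congr unif_mix; apply: boolp.funext => p.
by rewrite dactM // gprod_kilian_lmul // invMg mulgA mulgV mul1g.
Qed.
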